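(* Let $\Sigma$ be a signature and consider derivations in $\mathcal{J}(\Sigma)$. Suppose $\vdash_{\bar m}\bar s:\Theta\to\Gamma$. (a) If $\vdash_k B$ type $(\Gamma)$, then $\vdash_{k+\max(\bar m)} B[\bar s/\Gamma]$ type $(\Theta)$. (b) If $\vdash_k b:B\ (\Gamma)$, then $\vdash_{k+\max(\bar m)} b[\bar s/\Gamma]:B[\bar s/\Gamma]\ (\Theta)$.
   Context: Fix an infinite set $V$ of variables with decidable equality, and a fresh variable provider: functions $\varphi,\mathsf{fr}$ assigning to each finite $X\subseteq V$ an inhabited subset $\varphi(X)\subseteq V\setminus X$ and an element $\mathsf{fr}(X)\in\varphi(X)$. Fix disjoint sets $F$ (function symbols) and $T$ (type symbols) with decidable equality. Preelements are terms built from variables and symbols of $F$; a pretype is $S(t_1,\ldots,t_n)$ with $S\in T$ and $t_i$ preelements. $\mathrm{V}(E)$ is the set of variables of an expression $E$, $\equiv$ is syntactic identity, and $E[\bar a/\bar x]$ is simultaneous substitution. A precontext is a sequence $\Gamma=x_1:A_1,\ldots,x_n:A_n$ of pretypes with $x_k\in\varphi(\{x_1,\ldots,x_{k-1}\})$ and $\mathrm{V}(A_k)\subseteq\{x_1,\ldots,x_{k-1}\}$; $\mathrm{OV}(\Gamma)=x_1,\ldots,x_n$, $\mathrm{V}(\Gamma)=\{x_1,\ldots,x_n\}$, $\mathrm{Fresh}(\Gamma)=\varphi(\mathrm{V}(\Gamma))$, $\mathrm{fresh}(\Gamma)=\mathsf{fr}(\mathrm{V}(\Gamma))$, $E[\bar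 a/\Gamma]=E[\bar a/x_1,\ldots,x_n]$. Top variables: $\mathrm{TV}(\langle\rangle)=\emptyset$, $\mathrm{TV}(\Gamma,x:A)=(\mathrm{TV}(\Gamma)\setminus\mathrm{V}(A))\cup\{x\}$. A determining sequence for $\Gamma$ is a strictly increasing $\bar i=i_1,\ldots,i_k$ in $\{1,\ldots,n\}$ with $\mathrm{TV}(\Gamma)\subseteq\{x_{i_1},\ldots,x_{i_k}\}$; for $\bar a=a_1,\ldots,a_n$ put $\bar a_{\bar i}=a_{i_1},\ldots,a_{i_k}$. A type predeclaration is $(\Gamma,S,\bar i)$ with $S\in T$, $\bar i$ determining; a function predeclaration is $(\Gamma,f,\bar i,U)$ with $f\in F$, $\bar i$ determining, $U$ a pretype with $\mathrm{V}(U)\subseteq\mathrm{V}(\Gamma)$. A presignature is a set $\Sigma$ of predeclarations with no symbol declared twice. Judgements are ''$\Gamma$ context'', ''$A$ type $(\Gamma)$'', ''$a:A\ (\Gamma)$''. $\mathcal{J}(\Sigma)$ is the smallest set of judgements closed under: (R1) $\langle\rangle$ context; (R2) from $\Gamma$ context and $A$ type $(\Gamma)$ infer $\Gamma,x:A$ context, for $x\in\mathrm{Fresh}(\Gamma)$; (R3) from $x_1:A_1,\ldots,x_n:A_n$ context infer $x_i:A_i\ (x_1:A_1,\ldots,x_n:A_n)$; (R4) if $(\Gamma,S,\bar i)\in\Sigma$ and $\bar a:\Delta\to\Gamma$, infer $S(\bar a_{\bar i})$ type $(\Delta)$; (R5) if $(\Gamma,f,\bar i,U)\in\Sigma$, $\bar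 a:\Delta\to\Gamma$ and $U[\bar a/\Gamma]$ type $(\Delta)$, infer $f(\bar a_{\bar i}):U[\bar a/\Gamma]\ (\Delta)$. Here, for $\Gamma=x_1:A_1,\ldots,x_n:A_n$, the context map ''$\bar a:\Delta\to\Gamma$'' abbreviates the $n+2$ judgements $\Delta$ context, $\Gamma$ context, and $a_k:A_k[a_1,\ldots,a_{k-1}/x_1,\ldots,x_{k-1}]\ (\Delta)$ for $k=1,\ldots,n$. $\Sigma$ is a signature if ($\Gamma$ context)$\in\mathcal{J}(\Sigma)$ whenever $(\Gamma,S,\bar i)\in\Sigma$, and ($U$ type $(\Gamma)$)$\in\mathcal{J}(\Sigma)$ whenever $(\Gamma,f,\bar i,U)\in\Sigma$. Heights: a derivation consisting of a single application of (R1) has height $0$; applying a rule to premisses derived with heights $h_1,\ldots,h_r$ gives height $1+\max_j h_j$. $\vdash_k\mathcal U$ means $\mathcal U$ has a derivation in $\mathcal{J}(\Sigma)$ of height at most $k$. For a context map $\bar a:\Delta\to\Gamma$ with $|\Gamma|=n$, $\vdash_{m_1,\ldots,m_{n+2}}\bar a:\Delta\to\Gamma$ means its $n+2$ constituent judgements (in the order listed above) have derivations of heights at most $m_1,\ldots,m_{n+2}$; $\max(\bar m)$ is the largest $m_j$. *)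

From Stdlib Require Import List Arith Sorting.Sorted.
Import ListNotations.
Set Implicit Arguments.

Section Syntax.
Variables (V F T : Type).
Variable eqV : forall x y : V, {x = y} + {x <> y}.

Inductive pre : Type :=
| Var : V -> pre
| App : F -> list pre -> pre.

Record pty : Type := PTy { ty_sym : T; ty_args : list pre }.

(* precontexts x1:A1,...,xn:An, listed left to right *)
Definition ctx := list (V * pty).

Fixpoint vars_pre (t : pre) : list V :=
  match t with
  | Var x => [x]
  | App _ ts => flat_map vars_pre ts
  end.

Definition vars_ty (A : pty) : list V := flat_map vars_pre (ty_args A).

Definition ctx_vars (G : ctx) : list V := map fst G.

(* simultaneous substitution E[a1..an / x1..xn], given as list of (xi, ai) *)
Fixpoint lookup (sub : list (V * pre)) (y : V) : option pre :=
  match sub with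
  | [] => None
  | (x, t) :: sub' => if eqV x y then Some t else lookup sub' y
  end.

Fixpoint subst_pre (sub : list (V * pre)) (t : pre) : pre :=
  match t with
  | Var y => match lookup sub y with Some u => u | None => Var y end
  | App f ts => App f (map (subst_pre sub) ts)
  end.

Definition subst_ty (sub : list (V * pre)) (A : pty) : pty :=
  PTy (ty_sym A) (map (subst_pre sub) (ty_args A)).

Definition ctx_sub (G : ctx) (a : list pre) : list (V * pre) :=
  combine (ctx_vars G) a.

(* top variables: TV(<>) = {}, TV(G, x:A) = (TV(G) \ V(A)) u {x} *)
Definition TV (G : ctx) : V -> Prop :=
  fold_left (fun (P : V -> Prop) (p : V * pty) =>
               fun y => (P y /\ ~ In y (vars_ty (snd p))) \/ y = fst p)
            G (fun _ => False).

(* Determining sequences; indices are 0-based (i in {0..n-1}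
   corresponds to the paper's i+1 in {1..n}). *)
Definition determining (G : ctx) (ii : list nat) : Prop :=
  StronglySorted lt ii /\
  (forall i, In i ii -> i < length G) /\
  (forall y, TV G y -> exists i, In i ii /\ nth_error (ctx_vars G) i = Some y).

Definition select (ii : list nat) (a : list pre) : list pre :=
  flat_map (fun i => match nth_error a i with Some t => [t] | None => [] end) ii.

(* Fresh variable provider: finite subsets of V are represented by lists;
   phi and fr must depend only on the underlying set. *)
Definition fresh_provider (phi : list V -> V -> Prop) (fr : list V -> V) : Prop :=
  (forall X Y, (forall x, In x X <-> In x Y) -> forall x, phi X x <-> phi Y x) /\
  (forall X Y, (forall x, In x X <-> In x Y) -> fr X = fr Y) /\
  (forall X x, phi X x -> ~ In x X) /\
  (forall X, phi X (fr X)).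

Variable phi : list V -> V -> Prop.

Definition is_precontext (G : ctx) : Prop :=
  forall k x A, nth_error G k = Some (x, A) ->
    phi (ctx_vars (firstn k G)) x /\ incl (vars_ty A) (ctx_vars (firstn k G)).

Inductive decl : Type :=
| TDecl : ctx -> T -> list nat -> decl
| FDecl : ctx -> F -> list nat -> pty -> decl.

Definition decl_sym (d : decl) : T + F :=
  match d with
  | TDecl _ Sy _ => inl Sy
  | FDecl _ f _ _ => inr f
  end.

Definition well_formed_decl (d : decl) : Prop :=
  match d with
  | TDecl G _ ii => is_precontext G /\ determining G ii
  | FDecl G _ ii U => is_precontext G /\ determining G ii /\ incl (vars_ty U) (ctx_vars G)
  end.

Definition presignature (Sig : decl -> Prop) : Prop :=
  (forall d, Sig d -> well_formed_decl d) /\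
  (forall d1 d2, Sig d1 -> Sig d2 -> decl_sym d1 = decl_sym d2 -> d1 = d2).

Inductive judg : Type :=
| JCtx : ctx -> judg
| JType : ctx -> pty -> judg
| JElem : ctx -> pre -> pty -> judg.

Fixpoint cmap_elems (D : ctx) (acc : list (V * pre)) (G : ctx) (a : list pre)
  : list judg :=
  match G, a with
  | (x, A) :: G', t :: a' =>
      JElem D t (subst_ty acc A) :: cmap_elems D (acc ++ [(x, t)]) G' a'
  | _, _ => []
  end.

(* the n+2 judgements abbreviated by  a : Delta -> Gamma  (in order) *)
Definition cmap (D G : ctx) (a : list pre) : list judg :=
  JCtx D :: JCtx G :: cmap_elems D [] G a.

Variable Sig : decl -> Prop.

(* der J h : J has a derivation in J(Sig) of height exactly h *)
Inductive der : judg -> nat -> Prop :=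
| R1 : der (JCtx []) 0
| R2 : forall G A x h1 h2,
    der (JCtx G) h1 -> der (JType G A) h2 -> phi (ctx_vars G) x ->
    der (JCtx (G ++ [(x, A)])) (S (max h1 h2))
| R3 : forall G i x A h,
    der (JCtx G) h -> nth_error G i = Some (x, A) ->
    der (JElem G (Var x) A) (S h)
| R4 : forall G Sy ii D a hs,
    Sig (TDecl G Sy ii) -> length a = length G ->
    Forall2 der (cmap D G a) hs ->
    der (JType D (PTy Sy (select ii a))) (S (list_max hs))
| R5 : forall G f ii U D a hs h,
    Sig (FDecl G f ii U) -> length a = length G ->
    Forall2 der (cmap D G a) hs ->
    der (JType D (subst_ty (ctx_sub G a) U)) h ->
    der (JElem D (App f (select ii a)) (subst_ty (ctx_sub G a) U))
        (S (max (list_max hs) h)).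

Definition derivable (J : judg) : Prop := exists h, der J h.

(* |-_k J : J has a derivation of height at most k *)
Definition provable (k : nat) (J : judg) : Prop := exists h, h <= k /\ der J h.

Definition signature : Prop :=
  presignature Sig /\
  (forall G Sy ii, Sig (TDecl G Sy ii) -> derivable (JCtx G)) /\
  (forall G f ii U, Sig (FDecl G f ii U) -> derivable (JType G U)).

Definition cmap_provable (ms : list nat) (a : list pre) (D G : ctx) : Prop :=
  length a = length G /\ Forall2 (fun J m => provable m J) (cmap D G a) ms.

End Syntax.

(* A variable x_i of Gamma is sent to s_i, whose judgement
   s_i : A_i[s_1..s_{i-1}/x_1..x_{i-1}] (Theta) is one of those of the context map and
   so costs at most max(m).  For (R4) and (R5), the premisses a : Delta -> Gamma'
   become the context map a[s/Gamma] : Theta -> Gamma', because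
   A[a/Gamma'][s/Gamma] = A[a[s/Gamma]/Gamma']; each premiss costs at most max(m)
   more, and so does the conclusion. *)
From Stdlib Require Import List Arith Lia.
Import ListNotations.

Lemma Forall2_In_le_list_max {A : Type} (R : A -> nat -> Prop) l hs x :
  Forall2 R l hs -> In x l -> exists m, m <= list_max hs /\ R x m.
Proof.
  induction 1 as [|y h l hs Hyh _ IH]; simpl; [tauto|].
  intros [<-|Hx].
  - exists h; split; [lia|exact Hyh].
  - destruct (IH Hx) as [m [Hm HR]]. exists m; split; [lia|exact HR].
Qed.

Lemma Forall2_of_bounded {A : Type} (R : A -> nat -> Prop) l bound :
  (forall x, In x l -> exists h, h <= bound /\ R x h) ->
  exists hs, Forall2 R l hs /\ list_max hs <= bound.
Proof.
  induction l as [|x l IH]; intros H.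
  - exists []; simpl; split; [constructor|lia].
  - destruct (H x) as [h [Hh HR]]; [now left|].
    destruct IH as [hs [Hhs Hmax]]; [intros y Hy; apply H; now right|].
    exists (h :: hs); simpl; split; [constructor; assumption|lia].
Qed.

Lemma map_fst_combine {A B : Type} (l : list A) (a : list B) :
  length l <= length a -> map fst (combine l a) = l.
Proof.
  revert a; induction l as [|v l IH]; intros [|u a]; simpl; intros Hl; try lia; auto.
  f_equal; apply IH; lia.
Qed.

Section SubstitutionLemma.
Variables (V F T : Type).
Variable eqV : forall x y : V, {x = y} + {x <> y}.

Fixpoint pre_nested_ind (P : pre V F -> Prop) (HVar : forall x, P (Var F x))
  (HApp : forall f ts, Forall P ts -> P (App f ts)) (t : pre V F) : P t :=
  match t with
  | Var _ x => HVar x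
  | App f ts => HApp f ts ((fix go (l : list (pre V F)) : Forall P l :=
       match l with
       | [] => Forall_nil _
       | u :: l' => Forall_cons _ (pre_nested_ind P HVar HApp u) (go l')
       end) ts)
  end.

Lemma incl_vars_ty_arg (A : pty V F T) u :
  In u (ty_args A) -> incl (vars_pre u) (vars_ty A).
Proof. intros Hu y Hy; apply in_flat_map; eauto. Qed.

Lemma subst_pre_ext (s1 s2 : list (V * pre V F)) t :
  (forall y, In y (vars_pre t) -> lookup eqV s1 y = lookup eqV s2 y) ->
  subst_pre eqV s1 t = subst_pre eqV s2 t.
Proof.
  induction t as [x|f ts IH] using pre_nested_ind; intros H; simpl.
  - rewrite H; simpl; auto.
  - f_equal; apply map_ext_in; intros u Hu.
    apply (proj1 (Forall_forall _ _) IH u Hu).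
    intros y Hy; apply H; simpl; apply in_flat_map; eauto.
Qed.

Lemma subst_ty_ext (s1 s2 : list (V * pre V F)) (A : pty V F T) :
  (forall y, In y (vars_ty A) -> lookup eqV s1 y = lookup eqV s2 y) ->
  subst_ty eqV s1 A = subst_ty eqV s2 A.
Proof.
  intros H; unfold subst_ty; f_equal; apply map_ext_in; intros u Hu.
  apply subst_pre_ext; intros y Hy; apply H, (incl_vars_ty_arg A u); auto.
Qed.

(* [comp_sub sg s] is the substitution [s] followed by [sg], on the domain of [s]. *)
Definition comp_sub (sg s : list (V * pre V F)) : list (V * pre V F) :=
  map (fun p => (fst p, subst_pre eqV sg (snd p))) s.

Lemma lookup_comp_sub sg s y :
  lookup eqV (comp_sub sg s) y = option_map (subst_pre eqV sg) (lookup eqV s y).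
Proof.
  induction s as [|[x u] s IH]; simpl; auto.
  destruct (eqV x y); auto.
Qed.

Lemma lookup_in_dom (s : list (V * pre V F)) y :
  In y (map fst s) -> exists u, lookup eqV s y = Some u.
Proof.
  induction s as [|[x u] s IH]; simpl; [tauto|].
  intros H; destruct (eqV x y); eauto.
  destruct H; [congruence|auto].
Qed.

Lemma lookup_app (s1 s2 : list (V * pre V F)) y :
  lookup eqV (s1 ++ s2) y =
  match lookup eqV s1 y with Some u => Some u | None => lookup eqV s2 y end.
Proof.
  induction s1 as [|[x u] s1 IH]; simpl; auto.
  destruct (eqV x y); auto.
Qed.

Lemma subst_pre_comp sg s t :
  incl (vars_pre t) (map fst s) ->
  subst_pre eqV sg (subst_pre eqV s t) = subst_pre eqV (comp_sub sg s) t.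
Proof.
  induction t as [x|f ts IH] using pre_nested_ind; intros H; simpl.
  - rewrite lookup_comp_sub.
    destruct (lookup_in_dom s x) as [u ->]; [apply H; now left|reflexivity].
  - f_equal; rewrite map_map; apply map_ext_in; intros u Hu.
    apply (proj1 (Forall_forall _ _) IH u Hu).
    intros y Hy; apply H; simpl; apply in_flat_map; eauto.
Qed.

Lemma subst_ty_comp sg s (A : pty V F T) :
  incl (vars_ty A) (map fst s) ->
  subst_ty eqV sg (subst_ty eqV s A) = subst_ty eqV (comp_sub sg s) A.
Proof.
  intros H; unfold subst_ty; simpl; f_equal; rewrite map_map.
  apply map_ext_in; intros u Hu.
  apply subst_pre_comp; intros y Hy; apply H, (incl_vars_ty_arg A u); auto.
Qed.

Lemma combine_map_subst (l : list V) (a : list (pre V F)) sg :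
  combine l (map (subst_pre eqV sg) a) = comp_sub sg (combine l a).
Proof.
  revert a; induction l as [|v l IH]; intros [|u a]; simpl; auto.
  f_equal; auto.
Qed.

Lemma subst_ty_ctx_sub_comp sg (G : ctx V F T) a (U : pty V F T) :
  length a = length G -> incl (vars_ty U) (ctx_vars G) ->
  subst_ty eqV sg (subst_ty eqV (ctx_sub G a) U) =
  subst_ty eqV (ctx_sub G (map (subst_pre eqV sg) a)) U.
Proof.
  intros Hl HU; unfold ctx_sub.
  rewrite combine_map_subst, subst_ty_comp; [reflexivity|].
  rewrite map_fst_combine; [exact HU|].
  unfold ctx_vars; rewrite length_map; lia.
Qed.

Lemma subst_ty_combine_firstn (vs : list V) (s : list (pre V F)) i (A : pty V F T) :
  length vs <= length s -> incl (vars_ty A) (firstn i vs) ->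
  subst_ty eqV (combine (firstn i vs) (firstn i s)) A = subst_ty eqV (combine vs s) A.
Proof.
  intros Hl HA; apply subst_ty_ext; intros y Hy.
  rewrite <- (firstn_skipn i (combine vs s)), combine_firstn, lookup_app.
  destruct (lookup_in_dom (combine (firstn i vs) (firstn i s)) y) as [u ->];
    [|reflexivity].
  rewrite map_fst_combine; [apply HA; exact Hy|].
  rewrite !length_firstn; lia.
Qed.

(* The first occurrence of [x] in [vs] decides [lookup]. *)
Lemma lookup_combine_nth (vs : list V) (s : list (pre V F)) i x t :
  nth_error vs i = Some x -> nth_error s i = Some t -> ~ In x (firstn i vs) ->
  lookup eqV (combine vs s) x = Some t.
Proof.
  revert s i; induction vs as [|v vs IH]; intros [|u s] [|i]; simpl;
    intros Hx Ht Hfirst; try discriminate.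
  - inversion Hx; inversion Ht; subst; destruct (eqV x x); congruence.
  - destruct (eqV v x); [subst; tauto|].
    eapply IH; eauto.
Qed.

Lemma select_map (f : pre V F -> pre V F) ii a :
  select ii (map f a) = map f (select ii a).
Proof.
  unfold select; induction ii as [|j ii IH]; simpl; auto.
  rewrite map_app, IH, nth_error_map.
  destruct (nth_error a j); reflexivity.
Qed.

Lemma In_select ii (a : list (pre V F)) t : In t (select ii a) -> In t a.
Proof.
  unfold select; intros H; apply in_flat_map in H as [i [_ Hi]].
  destruct (nth_error a i) eqn:E; simpl in Hi; [|tauto].
  destruct Hi as [<-|[]]; eapply nth_error_In; eauto.
Qed.

Lemma cmap_elems_In (D : ctx V F T) acc G a t :
  length a = length G -> In t a ->
  exists B, In (JElem D t B) (cmap_elems eqV D acc G a).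
Proof.
  revert acc a; induction G as [|[x A] G IH]; intros acc [|u a]; simpl;
    intros Hl Ht; try discriminate; try tauto.
  destruct Ht as [<-|Ht]; eauto.
  destruct (IH (acc ++ [(x, u)]) a) as [B HB]; eauto.
Qed.

Lemma cmap_elems_nth (D : ctx V F T) acc G a i x A t :
  nth_error G i = Some (x, A) -> nth_error a i = Some t ->
  In (JElem D t (subst_ty eqV (acc ++ combine (firstn i (ctx_vars G)) (firstn i a)) A))
     (cmap_elems eqV D acc G a).
Proof.
  revert acc a i; induction G as [|[y B] G IH]; intros acc [|u a] [|i]; simpl;
    intros HG Ha; try discriminate.
  - inversion HG; inversion Ha; subst; rewrite app_nil_r; now left.
  - right; specialize (IH (acc ++ [(y, u)]) a i HG Ha).
    rewrite <- app_assoc in IH; exact IH.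
Qed.

(* Every judgement of the context map [a[sg] : Th -> G] is the image under [sg] of a
   judgement of [a : D -> G]; the hypothesis says that [acc] followed by [G] is scoped. *)
Lemma cmap_elems_subst (Th D : ctx V F T) sg acc G a J :
  (forall k x A, nth_error G k = Some (x, A) ->
     incl (vars_ty A) (map fst acc ++ ctx_vars (firstn k G))) ->
  In J (cmap_elems eqV Th (comp_sub sg acc) G (map (subst_pre eqV sg) a)) ->
  exists t B, In (JElem D t B) (cmap_elems eqV D acc G a) /\
    J = JElem Th (subst_pre eqV sg t) (subst_ty eqV sg B).
Proof.
  revert acc a; induction G as [|[x A] G IH]; intros acc [|u a]; simpl;
    intros Hscope HJ; try tauto.
  destruct HJ as [<-|HJ].
  - exists u, (subst_ty eqV acc A); split; [now left|].
    rewrite subst_ty_comp; [reflexivity|].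
    specialize (Hscope 0 x A eq_refl); simpl in Hscope.
    rewrite app_nil_r in Hscope; exact Hscope.
  - replace (comp_sub sg acc ++ [(x, subst_pre eqV sg u)])
      with (comp_sub sg (acc ++ [(x, u)])) in HJ
      by (unfold comp_sub; rewrite map_app; reflexivity).
    destruct (IH (acc ++ [(x, u)]) a) as [t [B [HB ->]]]; auto.
    + intros k y C Hk; specialize (Hscope (S k) y C Hk); simpl in Hscope.
      rewrite map_app, <- app_assoc; exact Hscope.
    + exists t, B; auto.
Qed.

Variable phi : list V -> V -> Prop.
Hypothesis phi_fresh : forall X x, phi X x -> ~ In x X.

Lemma is_precontext_snoc (G : ctx V F T) x A :
  is_precontext phi G -> incl (vars_ty A) (ctx_vars G) -> phi (ctx_vars G) x ->
  is_precontext phi (G ++ [(x, A)]).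
Proof.
  intros HG HA Hx k y B Hk.
  destruct (Nat.lt_ge_cases k (length G)) as [Hlt|Hge].
  - rewrite nth_error_app1 in Hk by exact Hlt.
    rewrite firstn_app; replace (k - length G) with 0 by lia.
    simpl; rewrite app_nil_r; exact (HG k y B Hk).
  - rewrite nth_error_app2 in Hk by exact Hge.
    destruct (k - length G) as [|n] eqn:E; simpl in Hk; [|destruct n; discriminate].
    inversion Hk; subst.
    rewrite firstn_app, E; simpl; rewrite app_nil_r.
    replace k with (length G) by lia; rewrite firstn_all; auto.
Qed.

Variable Sig : decl V F T -> Prop.

Definition scoped (J : judg V F T) : Prop :=
  match J with
  | JCtx G => is_precontext phi G
  | JType G A => incl (vars_ty A) (ctx_vars G)
  | JElem G t _ => incl (vars_pre t) (ctx_vars G)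
  end.

Lemma select_scoped (D G : ctx V F T) ii a :
  length a = length G -> (forall J, In J (cmap eqV D G a) -> scoped J) ->
  incl (flat_map (@vars_pre V F) (select ii a)) (ctx_vars D).
Proof.
  intros Hl Hcmap y Hy; apply in_flat_map in Hy as [t [Ht Hy]].
  destruct (cmap_elems_In D [] G a t Hl (In_select ii a t Ht)) as [B HB].
  exact (Hcmap _ (or_intror (or_intror HB)) y Hy).
Qed.

Lemma der_scoped h J : der eqV phi Sig J h -> scoped J.
Proof.
  revert J; induction h as [h IH] using lt_wf_ind; intros J Hd.
  assert (Hprem : forall L hs, Forall2 (der eqV phi Sig) L hs -> list_max hs < h ->
                    forall J', In J' L -> scoped J').
  { intros L hs Hf Hlt J' HJ'.
    destruct (Forall2_In_le_list_max _ _ _ _ Hf HJ') as [m [Hm Hd']].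
    exact (IH m ltac:(lia) _ Hd'). }
  destruct Hd as [|G A x h1 h2 HG HA Hx|G i x A h0 HG Hi
                 |G Sy ii D a hs HSig Hl Hf|G f ii U D a hs h0 HSig Hl Hf HU]; simpl.
  - intros k x A Hk; destruct k; discriminate.
  - apply is_precontext_snoc; auto.
    + exact (IH h1 ltac:(lia) _ HG).
    + exact (IH h2 ltac:(lia) _ HA).
  - intros y [<-|[]]; apply (in_map fst G (x, A)); eapply nth_error_In; eauto.
  - apply (select_scoped D G); auto; eapply Hprem; eauto; lia.
  - apply (select_scoped D G); auto; eapply Hprem; eauto; lia.
Qed.

Lemma provable_le k k' J :
  provable eqV phi Sig k J -> k <= k' -> provable eqV phi Sig k' J.
Proof. intros [h [Hh Hd]] Hk; exists h; split; [lia|exact Hd]. Qed.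

Hypothesis Sig_well_formed : forall d, Sig d -> well_formed_decl phi d.
Variables (Th Ga : ctx V F T) (s : list (pre V F)) (ms : list nat).
Hypothesis Hs : cmap_provable eqV phi Sig ms s Th Ga.

Let M := list_max ms.
Let sg := ctx_sub Ga s.

Lemma cmap_provable_In J : In J (cmap eqV Th Ga s) -> provable eqV phi Sig M J.
Proof.
  intros HJ; destruct Hs as [_ Hf].
  destruct (Forall2_In_le_list_max _ _ _ _ Hf HJ) as [m [Hm Hp]].
  exact (provable_le m M J Hp Hm).
Qed.

Lemma provable_subst_var i x A :
  is_precontext phi Ga -> nth_error Ga i = Some (x, A) ->
  provable eqV phi Sig M (JElem Th (subst_pre eqV sg (Var F x)) (subst_ty eqV sg A)).
Proof.
  intros HGa Hi.
  destruct (HGa i x A Hi) as [Hx HA].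
  destruct Hs as [Hl _].
  destruct (nth_error s i) as [t|] eqn:Et.
  2:{ apply nth_error_None in Et.
       assert (i < length Ga) by (apply nth_error_Some; congruence). lia. }
  assert (Hvar : nth_error (ctx_vars Ga) i = Some x)
    by (unfold ctx_vars; rewrite (map_nth_error fst _ _ Hi); reflexivity).
  assert (Hsx : lookup eqV sg x = Some t).
  { apply (lookup_combine_nth _ _ i); auto.
    unfold ctx_vars; rewrite firstn_map; exact (phi_fresh _ _ Hx). }
  simpl; rewrite Hsx.
  apply cmap_provable_In; right; right.
  unfold sg, ctx_sub; rewrite <- (subst_ty_combine_firstn (ctx_vars Ga) s i A).
  - exact (cmap_elems_nth Th [] Ga s i x A t Hi Et).
  - unfold ctx_vars; rewrite length_map; lia.
  - unfold ctx_vars; rewrite firstn_map; exact HA.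
Qed.

Definition subst_admissible (J : judg V F T) (h : nat) : Prop :=
  match J with
  | JCtx _ => True
  | JType G B => G = Ga ->
      provable eqV phi Sig (h + M) (JType Th (subst_ty eqV sg B))
  | JElem G b B => G = Ga ->
      provable eqV phi Sig (h + M) (JElem Th (subst_pre eqV sg b) (subst_ty eqV sg B))
  end.

Lemma cmap_subst_der (G : ctx V F T) a hs h :
  (forall m, m < h -> forall J, der eqV phi Sig J m -> subst_admissible J m) ->
  is_precontext phi G ->
  Forall2 (der eqV phi Sig) (cmap eqV Ga G a) hs -> list_max hs < h ->
  exists hs', Forall2 (der eqV phi Sig) (cmap eqV Th G (map (subst_pre eqV sg) a)) hs' /\
    list_max hs' <= list_max hs + M.
Proof.
  intros IH HG Hf Hlt; apply Forall2_of_bounded.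
  intros J [<-|[<-|HJ]].
  - destruct (cmap_provable_In (JCtx Th)) as [m [Hm Hd]]; [now left|].
    exists m; split; [lia|exact Hd].
  - destruct (Forall2_In_le_list_max _ _ _ _ Hf (or_intror (or_introl eq_refl)))
      as [m [Hm Hd]].
    exists m; split; [lia|exact Hd].
  - change (@nil (V * pre V F)) with (comp_sub sg []) in HJ.
    destruct (cmap_elems_subst Th Ga sg [] G a J) as [t [B [HB ->]]]; auto.
    { intros k x A Hk; exact (proj2 (HG k x A Hk)). }
    destruct (Forall2_In_le_list_max _ _ _ _ Hf (or_intror (or_intror HB)))
      as [m [Hm Hd]].
    destruct (IH m ltac:(lia) _ Hd eq_refl) as [m' [Hm' Hd']].
    exists m'; split; [lia|exact Hd'].
Qed.

Lemma der_subst h J : der eqV phi Sig J h -> subst_admissible J h.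
Proof.
  revert J; induction h as [h IH] using lt_wf_ind; intros J Hd.
  destruct Hd as [|G A x h1 h2 HG HA Hx|G i x A h0 HG Hi
                 |G Sy ii D a hs HSig Hl Hf|G f ii U D a hs h0 HSig Hl Hf HU];
    simpl; auto; intros ->.
  - apply (provable_le M); [|lia].
    exact (provable_subst_var i x A (der_scoped _ _ HG) Hi).
  - destruct (Sig_well_formed _ HSig) as [HG _].
    destruct (cmap_subst_der G a hs _ IH HG Hf (Nat.lt_succ_diag_r _)) as [hs' [Hf' Hb]].
    unfold subst_ty; simpl; rewrite <- select_map.
    exists (S (list_max hs')); split; [lia|].
    apply R4 with (G := G); auto; rewrite length_map; exact Hl.
  - destruct (Sig_well_formed _ HSig) as [HG [_ HUG]].
    destruct (cmap_subst_der G a hs _ IH HG Hf ltac:(lia)) as [hs' [Hf' Hb]].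
    destruct (IH h0 ltac:(lia) _ HU eq_refl) as [h' [Hh' HU']].
    rewrite (subst_ty_ctx_sub_comp sg G a U Hl HUG) in HU' |- *.
    simpl; rewrite <- select_map.
    exists (S (Nat.max (list_max hs') h')); split; [lia|].
    apply R5 with (G := G); auto; rewrite length_map; exact Hl.
Qed.

End SubstitutionLemma.

Theorem mainTheorem2 (V F T : Type)
  (eqV : forall x y : V, {x = y} + {x <> y})
  (eqF : forall x y : F, {x = y} + {x <> y})
  (eqT : forall x y : T, {x = y} + {x <> y})
  (V_infinite : forall l : list V, exists x, ~ In x l)
  (phi : list V -> V -> Prop) (fr : list V -> V)
  (Hprov : fresh_provider phi fr)
  (Sig : decl V F T -> Prop) (HSig : signature eqV phi Sig)
  (Theta Gamma : ctx V F T) (s : list (pre V F)) (ms : list nat)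
  (Hs : cmap_provable eqV phi Sig ms s Theta Gamma) :
  (forall k B,
      provable eqV phi Sig k (JType Gamma B) ->
      provable eqV phi Sig (k + list_max ms)
        (JType Theta (subst_ty eqV (ctx_sub Gamma s) B))) /\
  (forall k b B,
      provable eqV phi Sig k (JElem Gamma b B) ->
      provable eqV phi Sig (k + list_max ms)
        (JElem Theta (subst_pre eqV (ctx_sub Gamma s) b)
                     (subst_ty eqV (ctx_sub Gamma s) B))).
Proof.
  destruct Hprov as [_ [_ [phi_fresh _]]].
  destruct HSig as [[Sig_well_formed _] _].
  pose proof (der_subst V F T eqV phi phi_fresh Sig Sig_well_formed Theta Gamma s ms Hs)
    as Hsubst.
  split.
  - intros k B [h [Hh Hd]].
    apply (provable_le _ _ _ _ _ _ (h + list_max ms)); [|lia].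
    exact (Hsubst h _ Hd eq_refl).
  - intros k b B [h [Hh Hd]].
    apply (provable_le _ _ _ _ _ _ (h + list_max ms)); [|lia].
    exact (Hsubst h _ Hd eq_refl).
Qed.
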